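(* In the setting of the memory-$\tau$ lace expansion for self-avoiding walk on $\mathbb Z^d$, the $n$-th coefficient $\alpha_n$ of the formal series expansion $\beta_\tau=\sum_{n\ge1}\alpha_n s^n$ does not depend on $\tau$ as long as $\tau\ge 2n-2$ (including $\tau=\infty$).
   Context: For $\tau\in\{1,2,\dots\}\cup\{\infty\}$, a memory-$\tau$ walk is a nearest-neighbour walk $\omega$ on $\mathbb Z^d$ with $\omega(i)\ne\omega(j)$ whenever $0<|i-j|\le\tau$. The memory-$\tau$ lace expansion (Brydges–Spencer) produces coefficients $c_{a,b}=c_{a,b}(\tau)$, $(a,b)\in I=\{b\ge1,\ b+1\le a\le 2b\}$, defined from counts of memory-$\tau$ lace graphs of length $a$; $c_{a,b}(\tau)$ is independent of $\tau$ once $\tau\ge a$. The series $\sum_n\alpha_n s^n$ is the unique formal power series solution $\beta$ of $\beta=s[1+\sum_{(a,b)\in I}c_{a,b}(\tau)\beta^a s^{b-a}]$, $s=1/(2d)$. *)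

From HB Require Import structures.
From mathcomp Require Import all_boot all_order all_algebra.
Set Implicit Arguments. Unset Strict Implicit. Unset Printing Implicit Defensive.
Import Order.TTheory GRing.Theory Num.Theory.

Inductive memory : Type := Fin of nat | Inf.

Definition mem_valid (t : memory) : bool :=
  match t with Fin k => 0 < k | Inf => true end.

Definition mem_ge (t : memory) (k : nat) : bool :=
  match t with Fin m => k <= m | Inf => true end.

Definition in_I (a b : nat) : bool := (1 <= b) && (b.+1 <= a <= b.*2).

Local Open Scope ring_scope.

(* Formal power series in s are represented by their coefficient sequences
   alpha : nat -> R, alpha n = [s^n] beta.  Writing beta = s * gamma with
   gamma_i = alpha_(i+1), one has beta^a s^(b-a) = s^b gamma^a.
   trunc_gamma alpha k is the polynomial gamma truncated at degree k, which
   determines [s^j] gamma^a for all j <= k. *)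
Definition trunc_gamma (R : comNzRingType) (alpha : nat -> R) (k : nat) : {poly R} :=
  \poly_(i < k.+1) alpha i.+1.

(* alpha is the coefficient sequence of a formal power series solution beta of
   beta = s [1 + sum_{(a,b) in I} c_{a,b}(tau) beta^a s^(b-a)],
   compared coefficientwise. *)
Definition is_lace_solution (R : comNzRingType)
    (c : memory -> nat -> nat -> R) (t : memory) (alpha : nat -> R) : Prop :=
  alpha 0%N = 0 /\
  forall n : nat,
    alpha n.+1 =
      (n == 0%N)%:R +
      \sum_(1 <= b < n.+1) \sum_(b.+1 <= a < (b.*2).+1)
         c t a b * ((trunc_gamma alpha n) ^+ a)`_(n - b).

(* The recursion for the coefficients is triangular: [alpha (m+1)] only involves
   [c_{a,b}] with [b <= m], hence [a <= 2b <= 2m], and coefficients of index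
   [m - b < m] of powers of the truncated series, which depend on [alpha 1..m]
   only.  By strong induction, [alpha 1..n] is thus determined by the
   coefficients [c_{a,b}] with [a <= 2n - 2], which for [tau >= 2n - 2] coincide
   with those for [tau = infinity]. *)

From HB Require Import structures.
From mathcomp Require Import all_boot all_order all_algebra.
Import GRing.Theory.
Local Open Scope ring_scope.

Lemma mem_ge_leq (t : memory) (j k : nat) :
  (j <= k)%N -> mem_ge t k -> mem_ge t j.
Proof. by case: t => //= m; apply: leq_trans. Qed.

Lemma eq_coef_exprn_lt (R : nzSemiRingType) (p q : {poly R}) (J : nat) :
  (forall i, (i < J)%N -> p`_i = q`_i) ->
  forall a i, (i < J)%N -> (p ^+ a)`_i = (q ^+ a)`_i.
Proof.
move=> eq_pq; elim=> [|a IHa] i lt_iJ; first by rewrite !expr0.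
rewrite !exprS !coefM; apply: eq_bigr => k _.
have lt_kJ : (k < J)%N by apply: leq_ltn_trans lt_iJ; rewrite -ltnS.
by rewrite eq_pq // IHa // (leq_ltn_trans (leq_subr k i)).
Qed.

Lemma eq_coef_trunc_gamma (R : comNzRingType) (alpha alpha' : nat -> R) (m : nat) :
  (forall k, (0 < k <= m)%N -> alpha k = alpha' k) ->
  forall i, (i < m)%N -> (trunc_gamma alpha m)`_i = (trunc_gamma alpha' m)`_i.
Proof.
move=> eq_alpha i lt_im; rewrite !coef_poly ltnS ltnW //.
exact: eq_alpha.
Qed.

Section LaceSolutionsAgree.

Variables (R : comNzRingType) (c c' : memory -> nat -> nat -> R) (t t' : memory).
Variables (alpha alpha' : nat -> R) (N : nat).
Hypothesis sol : is_lace_solution c t alpha.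
Hypothesis sol' : is_lace_solution c' t' alpha'.
Hypothesis eq_c : forall a b, in_I a b -> (a <= N.*2)%N -> c t a b = c' t' a b.

Lemma lace_solutions_agree k : (k <= N.+1)%N -> alpha k = alpha' k.
Proof.
case: sol sol' => [alpha0 rec] [alpha'0 rec'].
elim/ltn_ind: k => [[_ _|m IHm le_mN]]; first by rewrite alpha0 alpha'0.
have eq_gamma : forall i, (i < m)%N ->
    (trunc_gamma alpha m)`_i = (trunc_gamma alpha' m)`_i.
  apply: eq_coef_trunc_gamma => k /andP[_ le_km].
  by apply: IHm; rewrite ?ltnS // (leq_trans le_km) // ltnW.
rewrite rec rec'; congr (_ + _).
apply: eq_big_nat => b /andP[b_gt0 lt_bm].
apply: eq_big_nat => a /andP[lt_ba lt_a2b].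
congr (_ * _); last first.
  apply: (@eq_coef_exprn_lt _ _ _ m) => //.
  by rewrite ltn_subrL b_gt0 (leq_trans b_gt0).
apply: eq_c; first by rewrite /in_I b_gt0 lt_ba -ltnS.
rewrite -ltnS (leq_trans lt_a2b) // ltnS leq_double.
by rewrite -ltnS (leq_trans lt_bm).
Qed.

End LaceSolutionsAgree.

Theorem mainTheorem3 (R : comNzRingType) (c : memory -> nat -> nat -> R)
  (hc : forall (t : memory) (a b : nat), mem_valid t -> in_I a b ->
          mem_ge t a -> c t a b = c Inf a b)
  (n : nat) (hn : (1 <= n)%N) (t : memory) (ht : mem_valid t)
  (htn : mem_ge t (n.*2 - 2))
  (alpha alpha_inf : nat -> R)
  (hsol : is_lace_solution c t alpha)
  (hsol_inf : is_lace_solution c Inf alpha_inf) :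
  alpha n = alpha_inf n.
Proof.
apply: (@lace_solutions_agree _ _ _ _ _ _ _ n.-1 hsol hsol_inf).
  2: by rewrite prednK.
move=> a b Iab le_a; apply: hc => //; apply: mem_ge_leq htn.
by rewrite (leq_trans le_a) // -subn1 doubleB.
Qed.
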